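(* Let $M$ be a finite abelian group and $i\colon\hat{M}\to\hat{M}$ a bijection with $i(x)=x\,i(x^{-1})$ for all $x\in\hat{M}$. Define $x\oplus y=x\,i(x/y)^{-1}$ for $x,y\in\hat{M}$. Then: (a) $\oplus$ is commutative; (b) $z(x\oplus y)=(zx)\oplus(zy)$ for all $x,y,z\in\hat{M}$; (c) $\oplus$ is cancellative, i.e., $x\oplus y=x\oplus z$ implies $y=z$.
   Context: $\hat{M}$ is the Pontryagin dual of $M$, written multiplicatively. *)

(* Pontryagin dual of a finite abelian group G, realised as
   the group of homomorphisms G -> unit circle of algC (extended by 1 outside G). *)
From mathcomp Require Import all_boot all_order all_algebra all_fingroup all_field.
Set Implicit Arguments. Unset Strict Implicit. Unset Printing Implicit Defensive.
Import GRing.Theory Num.Theory.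
Local Open Scope ring_scope.

Section Dual.
Variables (gT : finGroupType) (G : {group gT}).

Definition dualb (f : {ffun gT -> algC}) : bool :=
  [&& [forall x in G, `|f x| == 1],
      [forall x in G, forall y in G, f (x * y)%g == f x * f y] &
      [forall x, (x \notin G) ==> (f x == 1)]].

Definition dual := {f : {ffun gT -> algC} | dualb f}.

Lemma dualb_mul (f g : dual) : dualb [ffun x => sval f x * sval g x].
Proof.
case: f => f /= Hf; case: g => g /= Hg.
move: Hf Hg => /and3P[/forallP f1 /forallP f2 /forallP f3] /and3P[/forallP g1 /forallP g2 /forallP g3].
apply/and3P; split.
- apply/forallP=> x; apply/implyP=> xG; rewrite ffunE normrM.
  by rewrite (eqP (implyP (f1 x) xG)) (eqP (implyP (g1 x) xG)) mulr1.
- apply/forallP=> x; apply/implyP=> xG; apply/forallP=> y; apply/implyP=> yG.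
  rewrite !ffunE.
  have Fx := forallP (implyP (f2 x) xG) y; have Gx := forallP (implyP (g2 x) xG) y.
  by rewrite (eqP (implyP Fx yG)) (eqP (implyP Gx yG)) mulrACA.
- apply/forallP=> x; apply/implyP=> xG; rewrite ffunE.
  by rewrite (eqP (implyP (f3 x) xG)) (eqP (implyP (g3 x) xG)) mulr1.
Qed.

Lemma dualb_inv (f : dual) : dualb [ffun x => (sval f x)^-1].
Proof.
case: f => f /= Hf; move: Hf => /and3P[/forallP f1 /forallP f2 /forallP f3].
apply/and3P; split.
- apply/forallP=> x; apply/implyP=> xG; rewrite ffunE normfV.
  by rewrite (eqP (implyP (f1 x) xG)) invr1.
- apply/forallP=> x; apply/implyP=> xG; apply/forallP=> y; apply/implyP=> yG.
  rewrite !ffunE.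
  have Fx := forallP (implyP (f2 x) xG) y.
  by rewrite (eqP (implyP Fx yG)) invfM.
- apply/forallP=> x; apply/implyP=> xG; rewrite ffunE.
  by rewrite (eqP (implyP (f3 x) xG)) invr1.
Qed.

Definition dmul (f g : dual) : dual := exist (@dualb) _ (dualb_mul f g).
Definition dinv (f : dual) : dual := exist (@dualb) _ (dualb_inv f).
Definition ddiv (f g : dual) : dual := dmul f (dinv g).

End Dual.

(* The characters of M form an abelian group under pointwise multiplication,
   and the three properties of oplus hold in any abelian group G for any map i
   with i x = x i(x^-1): applied to x/y this gives i(x/y) = (x/y) i(y/x), which
   is exactly the symmetry x oplus y = y oplus x; translation invariance holds
   because (zx)/(zy) = x/y; and cancellation only needs i to be injective. *)

From HB Require Import structures.
From mathcomp Require Import all_boot all_order all_algebra all_fingroup all_field.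
Import GRing.Theory Num.Theory.

Section OplusTheory.
Local Open Scope group_scope.
Variables (G : groupType) (i : G -> G).
Hypothesis mulgC : commutative (@mul G).
Hypothesis i_law : forall x, i x = x * i x^-1.

Definition oplus x y := x * (i (x * y^-1))^-1.

Lemma i_div x y : i (x * y^-1) = x * y^-1 * i (y * x^-1).
Proof. by rewrite {1}i_law invgF. Qed.

Lemma oplusC : commutative oplus.
Proof.
move=> x y; rewrite /oplus i_div invgM invgF [_^-1 * _]mulgC mulgA.
by rewrite [x * _]mulgC mulgVK.
Qed.

Lemma mulg_oplus x y z : z * oplus x y = oplus (z * x) (z * y).
Proof.
rewrite /oplus mulgA; congr (_ * (i _)^-1).
by rewrite !(mulgC z) mulgKA.
Qed.

Lemma oplusI x : injective i -> injective (oplus x).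
Proof. by move=> i_inj y z /mulgI/invg_inj/i_inj/mulgI/invg_inj. Qed.

End OplusTheory.

Section DualGroup.
Local Open Scope ring_scope.
Variables (gT : finGroupType) (M : {group gT}).
Implicit Types f g h : dual M.

Lemma dualb_one : dualb M [ffun => 1].
Proof.
apply/and3P; split; apply/forallP => x; apply/implyP => _;
  rewrite ?ffunE ?normr1 //.
by apply/forall_inP => y _; rewrite !ffunE mulr1.
Qed.

Definition dual1 : dual M := exist (dualb M) _ dualb_one.

Lemma dual_neq0 f t : sval f t != 0.
Proof.
case: f => f /and3P[/forallP f_norm _ /forallP f_out] /=.
have [tM | tNM] := boolP (t \in M).
  by rewrite -normr_eq0 (eqP (implyP (f_norm t) tM)) oner_eq0.
by rewrite (eqP (implyP (f_out t) tNM)) oner_eq0.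
Qed.

Lemma dmulA : associative (@dmul _ M).
Proof. by move=> f g h; apply: val_inj; apply/ffunP => t; rewrite !ffunE mulrA. Qed.

Lemma dmulC : commutative (@dmul _ M).
Proof. by move=> f g; apply: val_inj; apply/ffunP => t; rewrite !ffunE mulrC. Qed.

Lemma dmul1 : left_id dual1 (@dmul _ M).
Proof. by move=> f; apply: val_inj; apply/ffunP => t; rewrite !ffunE mul1r. Qed.

Lemma dmulV : left_inverse dual1 (@dinv _ M) (@dmul _ M).
Proof.
by move=> f; apply: val_inj; apply/ffunP => t; rewrite !ffunE mulVf ?dual_neq0.
Qed.

HB.instance Definition _ := Choice.on (dual M).
HB.instance Definition _ := isGroup.Build (dual M) dmulA dmul1
  (fun f => etrans (dmulC f dual1) (dmul1 f))
  dmulV (fun f => etrans (dmulC f _) (dmulV f)).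

End DualGroup.

Theorem mainTheorem14 (gT : finGroupType) (M : {group gT}) (abM : abelian M)
  (i : dual M -> dual M) (ibij : bijective i)
  (hi : forall x : dual M, i x = dmul x (i (dinv x))) :
  let oplus := fun x y : dual M => dmul x (dinv (i (ddiv x y))) in
  (forall x y, oplus x y = oplus y x) /\
  (forall x y z, dmul z (oplus x y) = oplus (dmul z x) (dmul z y)) /\
  (forall x y z, oplus x y = oplus x z -> y = z).
Proof.
have dmulgC : commutative (@mul (dual M)) := @dmulC _ M.
split; last split.
- exact: oplusC dmulgC hi.
- exact: mulg_oplus dmulgC.
- move=> x; exact: oplusI (bij_inj ibij).
Qed.
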